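(* Let $s,t$ be processes, $\mathcal{Z}_s\in\mathrm{res}(s)$ with initial state $z_s$ and $\mathcal{Z}_t\in\mathrm{res}(t)$ with initial state $z_t$. Then $\Psi_{\mathcal{Z}_s}=\Psi_{\mathcal{Z}_t}$ if and only if $\Pr(\mathcal{C}(z_s,\alpha))=\Pr(\mathcal{C}(z_t,\alpha))$ for all $\alpha\in A^\star$.
   Context: PTS $(\mathcal{S},A,\to)$ with finitely supported distributions; processes image-finite and finite. Computations $c=s_0\xrightarrow{a_1}\cdots\xrightarrow{a_n}s_n$ via transitions $s_{i-1}\xrightarrow{a_i}\pi_i$, $s_i\in\mathrm{supp}(\pi_i)$; $\Pr(c)=\prod\pi_i(s_i)$ (empty computation: 1); $\mathrm{tr}(c)=a_1\cdots a_n$; $\mathcal{C}(z,\alpha)$ = computations from $z$ with trace $\alpha$; maximal = not a proper prefix of another computation from the same process; $\mathcal{C}_{\max}(z)$, $\mathcal{C}_{\max}(z,\alpha)$; $\Pr$ of a set is the sum. A resolution of $s$ is a PTS $\mathcal{Z}=(Z,A,\to_{\mathcal{Z}})$ with $\mathrm{corr}\colon Z\to\mathcal{S}$ and initial state $z_s$, $\mathrm{corr}(z_s)=s$, such that $z_s$ is in no target support, every other state is in the support of a target of a transition from a different state, every $z\xrightarrow{a}_{\mathcal{Z}}\pi$ is matched by $\mathrm{corr}(z)\xrightarrow{a}\pi'$ with $\pi(z')=\pi'(\mathrm{corr}(z'))$, and each state has at most one outgoing transition. Trace formulae $\Phi::=\top\mid\langle a\rangle\Phi$; tracing formula $\Phi_\varepsilon=\top$,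 $\Phi_{a\alpha}=\langle a\rangle\Phi_\alpha$. Trace distribution formulae $\bigoplus_{i\in I}r_i\Phi_i$ ($I$ finite nonempty, $\Phi_i$ pairwise distinct, $r_i\in(0,1]$, $\sum r_i=1$) are identified with probability distributions on trace formulae; equality means equality of these distributions. Mimicking formula of $\mathcal{Z}$ with initial state $z$: $\Psi_{\mathcal{Z}}=\bigoplus_{\alpha\in\mathrm{tr}(\mathcal{C}_{\max}(z))}\Pr(\mathcal{C}_{\max}(z,\alpha))\,\Phi_\alpha$. *)

From Stdlib Require Import Reals List Classical ClassicalDescription ClassicalEpsilon.
Set Implicit Arguments.
Open Scope R_scope.

Section PTSDefs.
Variable A : Type.

Definition transrel (S : Type) := S -> A -> (S -> R) -> Prop.

Definition lsum (X : Type) (f : X -> R) (l : list X) : R :=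
  fold_right (fun x acc => f x + acc) 0 l.

Definition is_fs_distr (S : Type) (pi : S -> R) : Prop :=
  (forall x, 0 <= pi x) /\
  exists l : list S, NoDup l /\ (forall x, pi x <> 0 -> In x l) /\ lsum pi l = 1.

Definition wf_pts (S : Type) (T : transrel S) : Prop :=
  forall s a pi, T s a pi -> is_fs_distr pi.

Definition image_finite (S : Type) (T : transrel S) : Prop :=
  forall s a, exists l : list (S -> R), forall pi, T s a pi -> In pi l.

(* A computation from a state: the list of its steps (a_i, pi_i, s_i). *)
Definition comp (S : Type) := list (A * (S -> R) * S).

Inductive is_comp (S : Type) (T : transrel S) : S -> comp S -> Prop :=
| comp_nil : forall s, is_comp T s nil
| comp_cons : forall s a pi s' c,
    T s a pi -> 0 < pi s' -> is_comp T s' c -> is_comp T s ((a, pi, s') :: c).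

Definition Prc (S : Type) (c : comp S) : R :=
  fold_right (fun st acc => (snd (fst st)) (snd st) * acc) 1 c.

Definition tr (S : Type) (c : comp S) : list A := map (fun st => fst (fst st)) c.

Definition finite_proc (S : Type) (T : transrel S) (s : S) : Prop :=
  exists N : nat, forall c, is_comp T s c -> (length c <= N)%nat.

Definition Cset (S : Type) (T : transrel S) (z : S) (alpha : list A) (c : comp S) : Prop :=
  is_comp T z c /\ tr c = alpha.

Definition is_max_comp (S : Type) (T : transrel S) (z : S) (c : comp S) : Prop :=
  is_comp T z c /\ ~ (exists d, d <> nil /\ is_comp T z (c ++ d)).

Definition Cmax (S : Type) (T : transrel S) (z : S) (alpha : list A) (c : comp S) : Prop :=
  is_max_comp T z c /\ tr c = alpha.

(* Sum of f over a finite set P (given as a predicate); 0 if P is not finite. *)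
Definition enumerates (X : Type) (P : X -> Prop) (l : list X) : Prop :=
  NoDup l /\ forall x, In x l <-> P x.

Definition fsum (X : Type) (P : X -> Prop) (f : X -> R) : R :=
  match excluded_middle_informative (exists l, enumerates P l) with
  | left H => lsum f (proj1_sig (constructive_indefinite_description _ H))
  | right _ => 0
  end.

Definition PrSet (S : Type) (P : comp S -> Prop) : R := fsum P (@Prc S).

Definition is_resolution (S : Type) (T : transrel S) (s : S)
  (Z : Type) (TZ : transrel Z) (corr : Z -> S) (zs : Z) : Prop :=
  wf_pts TZ /\
  corr zs = s /\
  (forall z a pi, TZ z a pi -> ~ (0 < pi zs)) /\
  (forall z', z' <> zs -> exists z a pi, z <> z' /\ TZ z a pi /\ 0 < pi z') /\
  (forall z a pi, TZ z a pi ->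
     exists pi', T (corr z) a pi' /\ forall z', pi z' = pi' (corr z')) /\
  (forall z a1 pi1 a2 pi2, TZ z a1 pi1 -> TZ z a2 pi2 -> a1 = a2 /\ pi1 = pi2).

Inductive TF : Type :=
| TTop : TF
| TDiam : A -> TF -> TF.

Fixpoint tracing (alpha : list A) : TF :=
  match alpha with
  | nil => TTop
  | a :: alpha' => TDiam a (tracing alpha')
  end.

(* Mimicking formula, as the probability distribution on trace formulae
   it is identified with: Phi |-> sum of the weights r_i with Phi_i = Phi. *)
Definition mimicking (Z : Type) (TZ : transrel Z) (z : Z) : TF -> R :=
  fun Phi =>
    fsum (fun alpha => (exists c, is_max_comp TZ z c /\ tr c = alpha) /\ tracing alpha = Phi)
         (fun alpha => PrSet (Cmax TZ z alpha)).

End PTSDefs.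

From Pilot Require Import Defs.
From Stdlib Require Import Reals List.
Open Scope R_scope.
From Stdlib Require Import Permutation FinFun Lra Lia Classical ClassicalEpsilon
  FunctionalExtensionality PropExtensionality.

(* In a resolution every state has at most one transition, so a computation
   with trace [alpha] either is maximal or continues by the unique transition
   of its last state, whose target distribution sums to 1.  Hence
     Pr C(z, alpha) = Pr Cmax(z, alpha) + sum_a Pr C(z, alpha a),
   where only finitely many [a] contribute.  The weights of the mimicking
   formula are the Pr Cmax(z, alpha), so they are computed from the
   Pr C(z, -) by this identity; conversely, as computations from a finite
   process have bounded length, Pr C(z, alpha) = 0 for long [alpha] and the
   identity recovers the Pr C(z, -) from the Pr Cmax(z, -) by downward
   induction on the length of [alpha]. *)

Definition classic_eq_dec {X : Type} (x y : X) : {x = y} + {x <> y} :=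
  excluded_middle_informative (x = y).

Lemma lsum_app {X} (f : X -> R) l1 l2 : lsum f (l1 ++ l2) = lsum f l1 + lsum f l2.
Proof. induction l1; simpl; [lra | rewrite IHl1; lra]. Qed.

Lemma lsum_perm {X} (f : X -> R) l1 l2 : Permutation l1 l2 -> lsum f l1 = lsum f l2.
Proof. induction 1; simpl; lra. Qed.

Lemma lsum_plus {X} (f g : X -> R) l :
  lsum (fun x => f x + g x) l = lsum f l + lsum g l.
Proof. induction l; simpl; [lra | rewrite IHl; lra]. Qed.

Lemma lsum_mul_l {X} (f : X -> R) k l : lsum (fun x => k * f x) l = k * lsum f l.
Proof. induction l; simpl; [lra | rewrite IHl; lra]. Qed.

Lemma lsum_ext {X} (f g : X -> R) l :
  (forall x, In x l -> f x = g x) -> lsum f l = lsum g l.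
Proof. induction l; simpl; intros H; auto. rewrite H, IHl; auto. Qed.

Lemma lsum_comm {X Y} (F : X -> Y -> R) I J :
  lsum (fun i => lsum (F i) J) I = lsum (fun j => lsum (fun i => F i j) I) J.
Proof.
  induction I; simpl.
  - induction J; simpl; lra.
  - rewrite IHI, <- lsum_plus. reflexivity.
Qed.

Lemma lsum_neq0 {X} (f : X -> R) l : lsum f l <> 0 -> exists x, In x l /\ f x <> 0.
Proof.
  induction l as [|x l IH]; simpl; intros H; [lra |].
  destruct (Req_EM_T (f x) 0) as [E | NE]; [| eauto].
  destruct IH as [y [? ?]]; [lra | eauto].
Qed.

Definition neq0b {X} (f : X -> R) (x : X) : bool :=
  if Req_EM_T (f x) 0 then false else true.

Lemma lsum_filter_neq0 {X} (f : X -> R) l : lsum f l = lsum f (filter (neq0b f) l).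
Proof.
  induction l as [|x l IH]; simpl; auto.
  unfold neq0b at 1; destruct (Req_EM_T (f x) 0); simpl; lra.
Qed.

Lemma lsum_support {X} (f : X -> R) l1 l2 : NoDup l1 -> NoDup l2 ->
  (forall x, f x <> 0 -> In x l1) -> (forall x, f x <> 0 -> In x l2) ->
  lsum f l1 = lsum f l2.
Proof.
  intros N1 N2 C1 C2. rewrite (lsum_filter_neq0 f l1), (lsum_filter_neq0 f l2).
  apply lsum_perm, NoDup_Permutation; try apply NoDup_filter; auto.
  intros x; rewrite !filter_In; unfold neq0b.
  destruct (Req_EM_T (f x) 0); split; intros [? ?]; try discriminate; auto.
Qed.

Lemma common_cover {X Y} (l : list X) (P : X -> Y -> Prop) :
  (forall x, In x l -> exists L, forall y, P x y -> In y L) ->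
  exists L, NoDup L /\ forall x y, In x l -> P x y -> In y L.
Proof.
  induction l as [|x l IH]; intros H.
  - exists nil; split; [constructor | intros ? ? []].
  - destruct (H x (or_introl eq_refl)) as [L1 H1].
    destruct IH as [L2 [_ H2]]; [intros; apply H; simpl; auto |].
    exists (nodup classic_eq_dec (L1 ++ L2)); split; [apply NoDup_nodup |].
    intros x' y [<- | Hx'] Hy; rewrite nodup_In, in_app_iff; eauto.
Qed.


Definition listable {X : Type} (P : X -> Prop) := exists l, forall x, In x l <-> P x.

Lemma listable_enumerates {X} (P : X -> Prop) : listable P -> exists l, enumerates P l.
Proof.
  intros [l H]. exists (nodup classic_eq_dec l). split; [apply NoDup_nodup |].
  intros x; rewrite nodup_In; auto.
Qed.

Lemma listable_incl {X} (P Q : X -> Prop) :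
  listable P -> (forall x, Q x -> P x) -> listable Q.
Proof.
  intros [l H] HQ.
  exists (filter (fun x => if excluded_middle_informative (Q x) then true else false) l).
  intros x; rewrite filter_In, H.
  destruct excluded_middle_informative as [q | q]; split.
  - tauto.
  - intros; split; auto.
  - intros [_ e]; discriminate.
  - tauto.
Qed.

Lemma listable_or {X} (P Q : X -> Prop) :
  listable P -> listable Q -> listable (fun x => P x \/ Q x).
Proof.
  intros [l1 H1] [l2 H2]. exists (l1 ++ l2).
  intros x; rewrite in_app_iff, H1, H2; tauto.
Qed.

Lemma listable_image {X Y} (E : X -> Prop) (g : X -> Y) :
  listable E -> listable (fun y => exists x, E x /\ y = g x).
Proof.
  intros [l H]. exists (map g l). intros y; rewrite in_map_iff.
  split; intros [x [Hx Hy]]; exists x; split; auto; apply H; auto.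
Qed.

Lemma listable_indexed_union {I X Y} (E : I -> X -> Prop) (g : I -> X -> Y) L :
  (forall i, In i L -> listable (E i)) ->
  listable (fun y => exists i, In i L /\ exists x, E i x /\ y = g i x).
Proof.
  induction L as [|i L IH]; intros H.
  - exists nil; intros y; simpl; split; [tauto | intros [? [[] _]]].
  - destruct (listable_or _ _ (listable_image _ (g i) (H i (or_introl eq_refl)))
                          (IH (fun j Hj => H j (or_intror Hj)))) as [l Hl].
    exists l; intros y; rewrite Hl; simpl. split.
    + intros [Hy | [j [Hj Hy]]]; eauto.
    + intros [j [[<- | Hj] Hy]]; eauto.
Qed.

Lemma fsum_enumerates {X} (P : X -> Prop) f l : enumerates P l -> fsum P f = lsum f l.
Proof.
  intros H. unfold fsum. destruct excluded_middle_informative as [E | NE]; [| exfalso; eauto].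
  destruct constructive_indefinite_description as [l' [N' H']]; simpl.
  destruct H as [N H]. apply lsum_perm, NoDup_Permutation; auto.
  intros x; rewrite H, H'; tauto.
Qed.

Lemma fsum_mul_l {X} (P : X -> Prop) f k : fsum P (fun x => k * f x) = k * fsum P f.
Proof. unfold fsum. destruct excluded_middle_informative; [apply lsum_mul_l | lra]. Qed.

Lemma fsum_pred_ext {X} (P Q : X -> Prop) f : (forall x, P x <-> Q x) -> fsum P f = fsum Q f.
Proof.
  intros H. assert (E : P = Q) by (extensionality x; apply propositional_extensionality; auto).
  rewrite E; reflexivity.
Qed.

Lemma fsum_empty {X} (P : X -> Prop) f : (forall x, ~ P x) -> fsum P f = 0.
Proof.
  intros H. rewrite (fsum_enumerates _ _ nil); auto.
  split; [constructor | intros x; simpl; split; [tauto | apply H]].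
Qed.

Lemma fsum_singleton {X} (P : X -> Prop) f x0 :
  (forall x, P x <-> x = x0) -> fsum P f = f x0.
Proof.
  intros H. rewrite (fsum_enumerates _ _ (x0 :: nil)); [simpl; lra |].
  split; [repeat constructor; simpl; tauto |].
  intros x; simpl; rewrite H; intuition.
Qed.

Lemma fsum_disjoint_or {X} (P Q : X -> Prop) f :
  listable P -> listable Q -> (forall x, P x -> Q x -> False) ->
  fsum (fun x => P x \/ Q x) f = fsum P f + fsum Q f.
Proof.
  intros FP FQ D.
  destruct (listable_enumerates _ FP) as [l1 [N1 H1]].
  destruct (listable_enumerates _ FQ) as [l2 [N2 H2]].
  rewrite (fsum_enumerates _ _ (l1 ++ l2)), (fsum_enumerates _ _ l1),
          (fsum_enumerates _ _ l2), lsum_app; try split; auto.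
  - apply NoDup_app; auto. intros x Hx1 Hx2; apply H1 in Hx1; apply H2 in Hx2; eauto.
  - intros x; rewrite in_app_iff, H1, H2; tauto.
Qed.

Lemma fsum_image_inj {X Y} (E : X -> Prop) (g : X -> Y) f :
  listable E -> Injective g ->
  fsum (fun y => exists x, E x /\ y = g x) f = fsum E (fun x => f (g x)).
Proof.
  intros FE Ig. destruct (listable_enumerates _ FE) as [l [N H]].
  rewrite (fsum_enumerates _ _ (map g l)), (fsum_enumerates _ _ l); try split; auto.
  - clear. induction l; simpl; congruence.
  - apply Injective_map_NoDup; auto.
  - intros y; rewrite in_map_iff.
    split; intros [x [Hx Hy]]; exists x; split; auto; apply H; auto.
Qed.

Lemma fsum_indexed_union {I X Y} (E : I -> X -> Prop) (g : I -> X -> Y) f L :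
  NoDup L -> (forall i, In i L -> listable (E i)) ->
  (forall i j x y, g i x = g j y -> i = j /\ x = y) ->
  fsum (fun y => exists i, In i L /\ exists x, E i x /\ y = g i x) f =
  lsum (fun i => fsum (E i) (fun x => f (g i x))) L.
Proof.
  induction L as [|i L IH]; intros N H Inj.
  - apply fsum_empty. intros y [j [[] _]].
  - simpl. apply NoDup_cons_iff in N as [Ni N].
    rewrite <- IH, <- (fsum_image_inj (E i) (g i)), <- fsum_disjoint_or; auto.
    + apply fsum_pred_ext. intros y; simpl; split.
      * intros [j [[<- | Hj] Hy]]; eauto.
      * intros [Hy | [j [Hj Hy]]]; eauto.
    + apply listable_image, H; simpl; auto.
    + apply listable_indexed_union; intros; apply H; simpl; auto.
    + intros y [x [_ ->]] [j [Hj [x' [_ E']]]]. apply Inj in E' as [-> _]; auto.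
    + apply H; simpl; auto.
    + intros x y E'; apply (Inj i i x y E').
    + intros j Hj; apply H; simpl; auto.
Qed.

Set Implicit Arguments.
Unset Strict Implicit.

Definition deterministic (A Z : Type) (TZ : transrel A Z) : Prop :=
  forall z a1 pi1 a2 pi2, TZ z a1 pi1 -> TZ z a2 pi2 -> a1 = a2 /\ pi1 = pi2.

Section DeterministicPTS.

Variables (A Z : Type) (TZ : transrel A Z).

Definition depth_bounded (z : Z) (n : nat) : Prop :=
  forall c, is_comp TZ z c -> (length c <= n)%nat.

Definition PrC (z : Z) (alpha : list A) : R := PrSet (Cset TZ z alpha).

Definition PrCmax (z : Z) (alpha : list A) : R := PrSet (Cmax TZ z alpha).

Lemma is_comp_cons_inv z a pi z' c :
  is_comp TZ z ((a, pi, z') :: c) -> TZ z a pi /\ 0 < pi z' /\ is_comp TZ z' c.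
Proof. intros H; inversion H; subst; auto. Qed.

Lemma depth_bounded_step z n a pi z' : depth_bounded z n -> TZ z a pi -> 0 < pi z' ->
  exists m, n = S m /\ depth_bounded z' m.
Proof.
  intros B H Hp. destruct n as [|m].
  - assert (Hc : is_comp TZ z ((a, pi, z') :: nil)) by (repeat constructor; auto).
    apply B in Hc; simpl in Hc; lia.
  - exists m; split; auto. intros c Hc.
    assert (Hc' : is_comp TZ z ((a, pi, z') :: c)) by (constructor; auto).
    apply B in Hc'; simpl in Hc'; lia.
Qed.

Lemma PrC_long z n alpha : depth_bounded z n -> (n < length alpha)%nat -> PrC z alpha = 0.
Proof.
  intros B Hl. apply fsum_empty. intros c [Hc Ht].
  apply B in Hc. unfold tr in Ht. rewrite <- Ht, length_map in Hl. lia.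
Qed.

Lemma is_max_comp_cons z a pi z' c : TZ z a pi -> 0 < pi z' ->
  is_max_comp TZ z ((a, pi, z') :: c) <-> is_max_comp TZ z' c.
Proof.
  intros H Hp; unfold is_max_comp; split.
  - intros [Hc Hm]. apply is_comp_cons_inv in Hc as [_ [_ Hc]]. split; auto.
    intros [d [Hd Hcd]]. apply Hm; exists d; split; auto. simpl; constructor; auto.
  - intros [Hc Hm]. split; [constructor; auto |].
    intros [d [Hd Hcd]]. apply Hm; exists d; split; auto.
    apply is_comp_cons_inv in Hcd; tauto.
Qed.

Lemma Cset_stuck z b alpha c : (forall pi, ~ TZ z b pi) -> ~ Cset TZ z (b :: alpha) c.
Proof.
  intros NT [Hc Ht]. destruct c as [|[[a pi] z'] c]; [discriminate |].
  injection Ht as -> _. apply is_comp_cons_inv in Hc as [H _]. exact (NT pi H).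
Qed.

Lemma PrC_stuck z b alpha : (forall pi, ~ TZ z b pi) -> PrC z (b :: alpha) = 0.
Proof. intros NT. apply fsum_empty. intros c; apply Cset_stuck; auto. Qed.

Lemma PrCmax_stuck z b alpha : (forall pi, ~ TZ z b pi) -> PrCmax z (b :: alpha) = 0.
Proof.
  intros NT. apply fsum_empty. intros c [[Hc _] Ht]. exact (Cset_stuck NT (conj Hc Ht)).
Qed.

Lemma PrC_nil z : PrC z nil = 1.
Proof.
  unfold PrC, PrSet. rewrite (fsum_singleton _ _ (nil : Defs.comp A Z)); [reflexivity |].
  intros c; unfold Cset; split.
  - intros [_ Ht]. destruct c; [reflexivity | discriminate].
  - intros ->; split; [constructor | reflexivity].
Qed.

Lemma PrCmax_nil_terminal z : (forall a pi, ~ TZ z a pi) -> PrCmax z nil = 1.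
Proof.
  intros NT. unfold PrCmax, PrSet.
  rewrite (fsum_singleton _ _ (nil : Defs.comp A Z)); [reflexivity |].
  intros c; unfold Cmax, is_max_comp; split.
  - intros [_ Ht]. destruct c; [reflexivity | discriminate].
  - intros ->. repeat split; [constructor |].
    intros [[|[[a pi] z'] d] [Hd Hc]]; [congruence |].
    apply is_comp_cons_inv in Hc as [H _]. exact (NT a pi H).
Qed.

Hypothesis wf : wf_pts TZ.
Hypothesis det : deterministic TZ.

Lemma trans_unique z a1 pi1 a2 pi2 :
  TZ z a1 pi1 -> TZ z a2 pi2 -> a1 = a2 /\ pi1 = pi2.
Proof. apply det. Qed.

Lemma trans_other_stuck z a pi b : TZ z a pi -> a <> b -> forall pi', ~ TZ z b pi'.
Proof. intros H Hab pi' H'. apply Hab, (trans_unique H H'). Qed.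

Lemma support_list z a pi : TZ z a pi ->
  exists l, NoDup l /\ (forall x, In x l <-> 0 < pi x) /\ lsum pi l = 1.
Proof.
  intros H. destruct (wf H) as [Hp [l [N [C S1]]]].
  set (pos := fun x => if Rlt_dec 0 (pi x) then true else false).
  assert (Hpos : forall x, In x (filter pos l) <-> 0 < pi x).
  { intros x; rewrite filter_In; unfold pos.
    destruct Rlt_dec as [q | q]; split; try tauto.
    - intros Hx; split; auto. apply C; lra.
    - intros [_ e]; discriminate. }
  exists (filter pos l). split; [apply NoDup_filter; auto |]. split; auto.
  rewrite <- S1. apply lsum_support; auto using NoDup_filter.
  intros x Hx; apply Hpos; specialize (Hp x); lra.
Qed.

Lemma PrCmax_nil_trans z a pi : TZ z a pi -> PrCmax z nil = 0.
Proof.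
  intros H. destruct (support_list H) as [[|z' l] [_ [Hl S1]]]; [simpl in S1; lra |].
  assert (Hz' : 0 < pi z') by (apply Hl; simpl; auto).
  apply fsum_empty. intros c [[Hc Hm] Ht]. destruct c; [| discriminate].
  apply Hm. exists ((a, pi, z') :: nil); split; [discriminate |].
  repeat constructor; auto.
Qed.

Lemma listable_comps n : forall z, depth_bounded z n -> listable (is_comp TZ z).
Proof.
  induction n as [|n IH]; intros z B.
  - apply listable_incl with (fun c => c = nil).
    + exists (nil :: nil); intros c; simpl; intuition.
    + intros c Hc; apply B in Hc; destruct c; simpl in *; [reflexivity | lia].
  - destruct (classic (exists a pi, TZ z a pi)) as [[a [pi H]] | NT].
    + destruct (support_list H) as [l [_ [Hl _]]].
      apply listable_incl with (fun c => c = nil \/ exists z', In z' l /\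
                                  exists c', is_comp TZ z' c' /\ c = (a, pi, z') :: c').
      * apply listable_or; [exists (nil :: nil); intros c; simpl; intuition |].
        apply listable_indexed_union. intros z' Hz'. apply Hl in Hz'.
        destruct (depth_bounded_step B H Hz') as [m [Hm B']]. injection Hm as <-. eauto.
      * intros [|[[a' pi'] z'] c] Hc; [auto | right].
        apply is_comp_cons_inv in Hc as [H1 [H2 H3]].
        destruct (trans_unique H1 H) as [-> ->].
        exists z'; split; [apply Hl; auto | eauto].
    + apply listable_incl with (fun c => c = nil).
      * exists (nil :: nil); intros c; simpl; intuition.
      * intros [|[[a' pi'] z'] c] Hc; [reflexivity |].
        apply is_comp_cons_inv in Hc as [H1 _]. exfalso; eauto.
Qed.

Lemma Cset_cons z a pi b alpha c : TZ z a pi -> Cset TZ z (b :: alpha) c ->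
  exists z' c', c = (a, pi, z') :: c' /\ a = b /\ 0 < pi z' /\ Cset TZ z' alpha c'.
Proof.
  intros H [Hc Ht]. destruct c as [|[[a' pi'] z'] c']; [discriminate |].
  apply is_comp_cons_inv in Hc as [H1 [H2 H3]].
  destruct (trans_unique H1 H) as [-> ->].
  injection Ht as -> Ht. exists z', c'. repeat split; auto.
Qed.

Lemma fsum_first_step z n a pi l (Q : Z -> Defs.comp A Z -> Prop) :
  depth_bounded z n -> TZ z a pi -> NoDup l -> (forall x, In x l <-> 0 < pi x) ->
  (forall z' c, Q z' c -> is_comp TZ z' c) ->
  fsum (fun c => exists z', In z' l /\ exists c', Q z' c' /\ c = (a, pi, z') :: c')
       (@Prc A Z)
  = lsum (fun z' => pi z' * fsum (Q z') (@Prc A Z)) l.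
Proof.
  intros B H N Hl HQ. rewrite fsum_indexed_union; auto.
  - apply lsum_ext; intros z' _. rewrite <- fsum_mul_l. reflexivity.
  - intros z' Hz'. apply Hl in Hz'. destruct (depth_bounded_step B H Hz') as [m [_ B']].
    apply listable_incl with (is_comp TZ z'); [exact (listable_comps B') | auto].
  - intros i j x y E; injection E; auto.
Qed.

Lemma PrC_trans z n a pi l alpha : depth_bounded z n -> TZ z a pi -> NoDup l ->
  (forall x, In x l <-> 0 < pi x) ->
  PrC z (a :: alpha) = lsum (fun z' => pi z' * PrC z' alpha) l.
Proof.
  intros B H N Hl. unfold PrC, PrSet.
  rewrite <- (fsum_first_step (Q := fun z' => Cset TZ z' alpha) B H N Hl)
    by (intros ? ? []; auto).
  apply fsum_pred_ext. intros c; split.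
  - intros Hc. destruct (Cset_cons H Hc) as (z' & c' & -> & _ & Hz' & Hc').
    exists z'. split; [apply Hl; auto | eauto].
  - intros (z' & Hz' & c' & [Hc' Ht] & ->). apply Hl in Hz'.
    split; [constructor; auto | simpl; congruence].
Qed.

Lemma PrCmax_trans z n a pi l alpha : depth_bounded z n -> TZ z a pi -> NoDup l ->
  (forall x, In x l <-> 0 < pi x) ->
  PrCmax z (a :: alpha) = lsum (fun z' => pi z' * PrCmax z' alpha) l.
Proof.
  intros B H N Hl. unfold PrCmax, PrSet.
  rewrite <- (fsum_first_step (Q := fun z' => Cmax TZ z' alpha) B H N Hl)
    by (intros ? ? [[? _] _]; auto).
  apply fsum_pred_ext. intros c; split.
  - intros [Hm Ht]. pose proof (proj1 Hm) as Hc.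
    destruct (Cset_cons H (conj Hc Ht)) as (z' & c' & -> & _ & Hz' & [_ Ht']).
    exists z'. split; [apply Hl; auto |].
    exists c'. split; auto. split; auto. eapply is_max_comp_cons; eauto.
  - intros (z' & Hz' & c' & [Hm Ht] & ->). apply Hl in Hz'.
    split; [eapply is_max_comp_cons; eauto | simpl; congruence].
Qed.

Lemma PrC_decomp alpha : forall z n, depth_bounded z n -> exists L, NoDup L /\
  (forall a, PrC z (alpha ++ a :: nil) <> 0 -> In a L) /\
  PrC z alpha = PrCmax z alpha + lsum (fun a => PrC z (alpha ++ a :: nil)) L.
Proof.
  induction alpha as [|b alpha IH]; intros z n B; simpl.
  - destruct (classic (exists a pi, TZ z a pi)) as [[a0 [pi H]] | NT].
    + destruct (support_list H) as [l [N [Hl S1]]].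
      exists (a0 :: nil). split; [repeat constructor; simpl; tauto |]. split.
      * intros a Ha. destruct (classic_eq_dec a0 a) as [-> | ne]; [simpl; auto |].
        exfalso; apply Ha, PrC_stuck, (trans_other_stuck H ne).
      * simpl. rewrite PrC_nil, (PrCmax_nil_trans H), (PrC_trans nil B H N Hl), (lsum_ext _ pi);
          [lra |].
        intros; rewrite PrC_nil; lra.
    + exists nil. split; [constructor |]. split.
      * intros a Ha; exfalso; apply Ha, PrC_stuck; eauto.
      * rewrite PrC_nil, PrCmax_nil_terminal; [simpl; lra | eauto].
  - destruct (classic (exists pi, TZ z b pi)) as [[pi H] | NT].
    + destruct (support_list H) as [l [N [Hl S1]]].
      assert (IHl : forall z', In z' l -> exists L, NoDup L /\
                (forall a, PrC z' (alpha ++ a :: nil) <> 0 -> In a L) /\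
                PrC z' alpha = PrCmax z' alpha + lsum (fun a => PrC z' (alpha ++ a :: nil)) L).
      { intros z' Hz'. apply Hl in Hz'.
        destruct (depth_bounded_step B H Hz') as [m [_ B']]. exact (IH z' m B'). }
      destruct (common_cover l (fun z' a => PrC z' (alpha ++ a :: nil) <> 0)) as [L [NL HL]].
      { intros z' Hz'. destruct (IHl z' Hz') as [L0 [_ [C0 _]]]. eauto. }
      exists L. split; auto. split.
      * intros a Ha. rewrite (PrC_trans _ B H N Hl) in Ha.
        apply lsum_neq0 in Ha as [z' [Hz' Ha]].
        apply (HL z'); auto. intros E; apply Ha; rewrite E; lra.
      * rewrite (PrC_trans _ B H N Hl), (PrCmax_trans _ B H N Hl).
        rewrite (lsum_ext _ (fun z' => pi z' * PrCmax z' alpha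
                   + lsum (fun a => pi z' * PrC z' (alpha ++ a :: nil)) L)).
        -- rewrite lsum_plus, lsum_comm. f_equal.
           apply lsum_ext; intros a _. symmetry; exact (PrC_trans _ B H N Hl).
        -- intros z' Hz'. destruct (IHl z' Hz') as [L0 [N0 [C0 E0]]].
           rewrite E0, lsum_mul_l, (lsum_support _ L0 L); auto; [lra |].
           intros a Ha; apply (HL z'); auto.
    + assert (Stuck : forall pi, ~ TZ z b pi) by eauto.
      exists nil. split; [constructor |]. split.
      * intros a Ha; exfalso; apply Ha, PrC_stuck, Stuck.
      * rewrite (PrC_stuck _ Stuck), (PrCmax_stuck _ Stuck); simpl; lra.
Qed.

End DeterministicPTS.

Section TwoDeterministicPTS.

Variables (A Z1 Z2 : Type) (T1 : transrel A Z1) (T2 : transrel A Z2).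
Variables (z1 : Z1) (z2 : Z2) (n1 n2 : nat).
Hypotheses (wf1 : wf_pts T1) (wf2 : wf_pts T2).
Hypotheses (det1 : deterministic T1) (det2 : deterministic T2).
Hypotheses (B1 : depth_bounded T1 z1 n1) (B2 : depth_bounded T2 z2 n2).

Lemma PrC_decomp_common alpha : exists L,
  PrC T1 z1 alpha = PrCmax T1 z1 alpha + lsum (fun a => PrC T1 z1 (alpha ++ a :: nil)) L /\
  PrC T2 z2 alpha = PrCmax T2 z2 alpha + lsum (fun a => PrC T2 z2 (alpha ++ a :: nil)) L.
Proof.
  destruct (PrC_decomp wf1 det1 alpha B1) as [L1 [N1 [C1 E1]]].
  destruct (PrC_decomp wf2 det2 alpha B2) as [L2 [N2 [C2 E2]]].
  set (L := nodup classic_eq_dec (L1 ++ L2)).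
  assert (NL : NoDup L) by apply NoDup_nodup.
  assert (HL : forall a, In a L1 \/ In a L2 -> In a L)
    by (intros a Ha; unfold L; rewrite nodup_In, in_app_iff; auto).
  exists L. split.
  - rewrite E1. f_equal.
    apply lsum_support; auto; intros a Ha; apply HL; auto.
  - rewrite E2. f_equal.
    apply lsum_support; auto; intros a Ha; apply HL; auto.
Qed.

(* Downward induction on the length of [alpha], starting above the depth
   bounds where both sides vanish. *)
Lemma PrCmax_eq_PrC_eq :
  (forall alpha, PrCmax T1 z1 alpha = PrCmax T2 z2 alpha) ->
  forall alpha, PrC T1 z1 alpha = PrC T2 z2 alpha.
Proof.
  intros HM.
  assert (K : forall k alpha, (n1 + n2 < length alpha + k)%nat ->
                PrC T1 z1 alpha = PrC T2 z2 alpha).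
  { induction k as [|k IH]; intros alpha Hl.
    - rewrite (PrC_long B1), (PrC_long B2); [reflexivity | lia | lia].
    - destruct (PrC_decomp_common alpha) as [L [E1 E2]].
      rewrite E1, E2, HM. f_equal.
      apply lsum_ext; intros a _. apply IH. rewrite length_app; simpl; lia. }
  intros alpha. apply (K (S (n1 + n2))). lia.
Qed.

Lemma PrC_eq_PrCmax_eq :
  (forall alpha, PrC T1 z1 alpha = PrC T2 z2 alpha) ->
  forall alpha, PrCmax T1 z1 alpha = PrCmax T2 z2 alpha.
Proof.
  intros HP alpha. destruct (PrC_decomp_common alpha) as [L [E1 E2]].
  assert (Ext := lsum_ext (fun a => PrC T1 z1 (alpha ++ a :: nil))
                          (fun a => PrC T2 z2 (alpha ++ a :: nil)) L (fun a _ => HP _)).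
  rewrite HP in E1. lra.
Qed.

End TwoDeterministicPTS.

Lemma tracing_inj (A : Type) (alpha beta : list A) : tracing alpha = tracing beta -> alpha = beta.
Proof.
  revert beta; induction alpha; intros [|b beta]; simpl; intros H; try discriminate; auto.
  injection H as -> H. f_equal; auto.
Qed.

Lemma tracing_surj (A : Type) (Phi : TF A) : exists alpha, Phi = tracing alpha.
Proof.
  induction Phi as [|a Phi [alpha ->]]; [exists nil | exists (a :: alpha)]; reflexivity.
Qed.

Lemma mimicking_tracing (A Z : Type) (TZ : transrel A Z) z alpha :
  mimicking TZ z (tracing alpha) = PrCmax TZ z alpha.
Proof.
  unfold mimicking.
  destruct (classic (exists c, is_max_comp TZ z c /\ tr c = alpha)) as [Ex | NEx].
  - apply fsum_singleton. intros beta; split.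
    + intros [_ H]; apply tracing_inj; auto.
    + intros ->; auto.
  - rewrite fsum_empty.
    + symmetry; apply fsum_empty. intros c Hc; apply NEx; exists c; auto.
    + intros beta [Hbeta Ht]. apply tracing_inj in Ht; subst; auto.
Qed.

Lemma mimicking_eq_iff (A Z1 Z2 : Type) (T1 : transrel A Z1) (T2 : transrel A Z2) z1 z2 :
  mimicking T1 z1 = mimicking T2 z2 <->
  forall alpha, PrCmax T1 z1 alpha = PrCmax T2 z2 alpha.
Proof.
  split.
  - intros HM alpha. rewrite <- !mimicking_tracing, HM. reflexivity.
  - intros HM. extensionality Phi. destruct (tracing_surj Phi) as [alpha ->].
    rewrite !mimicking_tracing. apply HM.
Qed.

Lemma resolution_comp_length (A S Z : Type) (T : transrel A S) (TZ : transrel A Z)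
  s corr zs : is_resolution T s TZ corr zs -> forall c z, is_comp TZ z c ->
  exists c', is_comp T (corr z) c' /\ length c' = length c.
Proof.
  intros (_ & _ & _ & _ & Hmatch & _).
  induction c as [|[[a pi] z'] c IH]; intros z Hc.
  - exists nil; split; [constructor | reflexivity].
  - apply is_comp_cons_inv in Hc as [H1 [H2 H3]].
    destruct (Hmatch _ _ _ H1) as [pi' [HT Hpi]].
    destruct (IH z' H3) as [c' [Hc' Hl]].
    exists ((a, pi', corr z') :: c'). split; [constructor; auto; rewrite <- Hpi; auto |].
    simpl; congruence.
Qed.

Lemma resolution_depth_bounded (A S Z : Type) (T : transrel A S) (TZ : transrel A Z)
  s corr zs : is_resolution T s TZ corr zs -> finite_proc T s ->
  exists n, depth_bounded TZ zs n.
Proof.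
  intros HR [N HN]. exists N. intros c Hc.
  destruct (resolution_comp_length HR Hc) as [c' [Hc' Hl]].
  destruct HR as (_ & Hs & _). rewrite Hs in Hc'. rewrite <- Hl; auto.
Qed.

Unset Implicit Arguments.
Set Strict Implicit.

Theorem theorem9 (A S : Type) (T : transrel A S)
  (HT : wf_pts T) (Himf : image_finite T)
  (s t : S) (Hs : finite_proc T s) (Ht : finite_proc T t)
  (Zs : Type) (TZs : transrel A Zs) (corrs : Zs -> S) (zs : Zs)
  (HZs : is_resolution T s TZs corrs zs)
  (Zt : Type) (TZt : transrel A Zt) (corrt : Zt -> S) (zt : Zt)
  (HZt : is_resolution T t TZt corrt zt) :
  mimicking TZs zs = mimicking TZt zt <->
  (forall alpha : list A, PrSet (Cset TZs zs alpha) = PrSet (Cset TZt zt alpha)).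
Proof.
  destruct (resolution_depth_bounded HZs Hs) as [ns Bs].
  destruct (resolution_depth_bounded HZt Ht) as [nt Bt].
  destruct HZs as (Ws & _ & _ & _ & _ & Ds), HZt as (Wt & _ & _ & _ & _ & Dt).
  rewrite mimicking_eq_iff. split.
  - exact (PrCmax_eq_PrC_eq Ws Wt Ds Dt Bs Bt).
  - exact (PrC_eq_PrCmax_eq Ws Wt Ds Dt Bs Bt).
Qed.
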